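(* Let $(\mathfrak h,[\cdot,\cdot]_{\mathfrak h},[\![\cdot,\cdot,\cdot]\!]_{\mathfrak h})$ be a Lie-Yamaguti algebra and $(\mathfrak h;\rho,\mu)$ a representation of it on $\mathfrak h$, with dual representation $(\mathfrak h^*;\rho^*,-\mu^*\tau)$. Suppose that the semidirect product Lie-Yamaguti algebra $\mathfrak h\ltimes_{\rho^*,-\mu^*\tau}\mathfrak h^*$, together with $\omega_p$, is a phase space of $\mathfrak h$. Then $x*y=\rho(x)y$ and $\{x,y,z\}=\mu(y,z)x$ ($x,y,z\in\mathfrak h$) define a pre-Lie-Yamaguti algebra structure on $\mathfrak h$.
   Context: All vector spaces are over a field of characteristic $0$ and finite-dimensional. A Lie-Yamaguti algebra is a vector space $\mathfrak g$ with a bilinear skew-symmetric $[\cdot,\cdot]$ and a trilinear $[\![\cdot,\cdot,\cdot]\!]$ skew-symmetric in its first two arguments such that for all $x,y,z,w,t$: (1) $[[x,y],z]+[[y,z],x]+[[z,x],y]+[\![x,y,z]\!]+[\![y,z,x]\!]+[\![z,x,y]\!]=0$; (2) $[\![[x,y],z,w]\!]+[\![[y,z],x,w]\!]+[\![[z,x],y,w]\!]=0$; (3) $[\![x,y,[z,w]]\!]=[[\![x,y,z]\!],w]+[z,[\![x,y,w]\!]]$; (4) $[\![x,y,[\![z,w,t]\!]]\!]=[\![[\![x,y,z]\!],w,t]\!]+[\![z,[\![x,y,w]\!],t]\!]+[\![z,w,[\![x,y,t]\!]]\!]$. A representation $(V;\rho,\mu)$ of $\mathfrak g$ is a linear $\rho:\mathfrak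 g\to\mathfrak{gl}(V)$ and bilinear $\mu:\otimes^2\mathfrak g\to\mathfrak{gl}(V)$ such that, with $D_{\rho,\mu}(x,y):=\mu(y,x)-\mu(x,y)+[\rho(x),\rho(y)]-\rho([x,y])$: $\mu([x,y],z)-\mu(x,z)\rho(y)+\mu(y,z)\rho(x)=0$; $\mu(x,[y,z])-\rho(y)\mu(x,z)+\rho(z)\mu(x,y)=0$; $\rho([\![x,y,z]\!])=[D_{\rho,\mu}(x,y),\rho(z)]$; $\mu(z,w)\mu(x,y)-\mu(y,w)\mu(x,z)-\mu(x,[\![y,z,w]\!])+D_{\rho,\mu}(y,z)\mu(x,w)=0$; $\mu([\![x,y,z]\!],w)+\mu(z,[\![x,y,w]\!])=[D_{\rho,\mu}(x,y),\mu(z,w)]$. The dual representation is $(V^*;\rho^*,-\mu^*\tau)$ with $\langle\rho^*(x)\alpha,v\rangle=-\langle\alpha,\rho(x)v\rangle$, $\langle\mu^*(x,y)\alpha,v\rangle=-\langle\alpha,\mu(x,y)v\rangle$, and $(-\mu^*\tau)(x,y)=-\mu^*(y,x)$. The semidirect product $\mathfrak g\ltimes_{\rho',\mu'}V$ for a representation $(V;\rho',\mu')$ is $\mathfrak g\oplus V$ with $[x+u,y+v]=[x,y]+\rho'(x)v-\rho'(y)u$ and $[\![x+u,y+v,z+w]\!]=[\![x,y,z]\!]+D_{\rho',\mu'}(x,y)w+\mu'(y,z)u-\mu'(x,z)v$. On $\mathfrak h\oplus\mathfrak h^*$, $\omega_p(x+\alpha,y+\beta)=\langle\alpha,y\rangle-\langle\beta,x\rangle$.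 A phase space of $\mathfrak h$ is a Lie-Yamaguti algebra structure on $\mathfrak h\oplus\mathfrak h^*$ for which $\omega_p$ is a symplectic structure (nondegenerate skew form with $\omega(x,[y,z])+\omega(y,[z,x])+\omega(z,[x,y])=0$ and $\omega(z,[\![x,y,w]\!])-\omega(x,[\![w,z,y]\!])+\omega(y,[\![w,z,x]\!])-\omega(w,[\![x,y,z]\!])=0$) and such that $\mathfrak h$ (with its original brackets) and $\mathfrak h^*$ are Lie-Yamaguti subalgebras. A pre-Lie-Yamaguti algebra is a vector space $A$ with a bilinear operation $*$ and a trilinear operation $\{\cdot,\cdot,\cdot\}$ such that, writing $[x,y]_C=x*y-y*x$, $(x,y,z)=(x*y)*z-x*(y*z)$ and $\{x,y,z\}_D=\{z,y,x\}-\{z,x,y\}+(y,x,z)-(x,y,z)$, for all $x,y,z,w,t\in A$: (P1) $\{z,[x,y]_C,w\}-\{y*z,x,w\}+\{x*z,y,w\}=0$; (P2) $\{x,y,[z,w]_C\}=z*\{x,y,w\}-w*\{x,y,z\}$; (P3) $\{\{x,y,z\},w,t\}-\{\{x,y,w\},z,t\}-\{x,y,\{z,w,t\}_D\}-\{x,y,\{z,w,t\}\}+\{x,y,\{w,z,t\}\}+\{z,w,\{x,y,t\}\}_D=0$; (P4) $\{z,\{x,y,w\}_D,t\}+\{z,\{x,y,w\},t\}-\{z,\{y,x,w\},t\}+\{z,w,\{x,y,t\}_D\}+\{z,w,\{x,y,t\}\}-\{z,w,\{y,x,t\}\}=\{x,y,\{z,w,t\}\}_D-\{\{x,y,z\}_D,w,t\}$;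 (P5) $\{x,y,z\}_D*w+\{x,y,z\}*w-\{y,x,z\}*w=\{x,y,z*w\}_D-z*\{x,y,w\}_D$. *)

From HB Require Import structures.
From mathcomp Require Import all_boot all_order all_algebra.
Set Implicit Arguments. Unset Strict Implicit. Unset Printing Implicit Defensive.
Import GRing.Theory.
Local Open Scope ring_scope.

Section LY.
Variable F : fieldType.

Definition LieYamaguti (V : lmodType F) (br : V -> V -> V) (tr : V -> V -> V -> V) : Prop :=
  (
      (forall a x y z, br (a *: x + y) z = a *: br x z + br y z) /\
      (forall a x y z, br z (a *: x + y) = a *: br z x + br z y) /\
      (forall x y, br x y = - br y x) /\
      (forall a x y z w, tr (a *: x + y) z w = a *: tr x z w + tr y z w) /\
      (forall a x y z w, tr z (a *: x + y) w = a *: tr z x w + tr z y w) /\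
      (forall a x y z w, tr z w (a *: x + y) = a *: tr z w x + tr z w y) /\
      (forall x y z, tr x y z = - tr y x z) /\
      ((forall x y z, br (br x y) z + br (br y z) x + br (br z x) y
                         + tr x y z + tr y z x + tr z x y = 0) /\
          (forall x y z w, tr (br x y) z w + tr (br y z) x w + tr (br z x) y w = 0) /\
          (forall x y z w, tr x y (br z w) = br (tr x y z) w + br z (tr x y w)) /\
          (forall x y z w t, tr x y (tr z w t)
                   = tr (tr x y z) w t + tr z (tr x y w) t + tr z w (tr x y t)))).

(* rho x and mu x y are linear endomorphisms of W, given as functions W -> W *)
Definition Dop (V W : lmodType F) (br : V -> V -> V) (rho : V -> W -> W)
  (mu : V -> V -> W -> W) (x y : V) (w : W) : W :=
  mu y x w - mu x y w + (rho x (rho y w) - rho y (rho x w)) - rho (br x y) w.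

Definition representation (V W : lmodType F) (br : V -> V -> V) (tr : V -> V -> V -> V)
  (rho : V -> W -> W) (mu : V -> V -> W -> W) : Prop :=
  let D := Dop br rho mu in
  (
      (forall a x y w, rho (a *: x + y) w = a *: rho x w + rho y w) /\
      (forall x a v w, rho x (a *: v + w) = a *: rho x v + rho x w) /\
      (forall a x y z w, mu (a *: x + y) z w = a *: mu x z w + mu y z w) /\
      (forall a x y z w, mu z (a *: x + y) w = a *: mu z x w + mu z y w) /\
      (forall x y a v w, mu x y (a *: v + w) = a *: mu x y v + mu x y w) /\
      ((forall x y z w, mu (br x y) z w - mu x z (rho y w) + mu y z (rho x w) = 0) /\
          (forall x y z w, mu x (br y z) w - rho y (mu x z w) + rho z (mu x y w) = 0) /\
          (forall x y z w, rho (tr x y z) w = D x y (rho z w) - rho z (D x y w)) /\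
          (forall x y z t v, mu z t (mu x y v) - mu y t (mu x z v) - mu x (tr y z t) v
                             + D y z (mu x t v) = 0) /\
          (forall x y z t v, mu (tr x y z) t v + mu z (tr x y t) v
                             = D x y (mu z t v) - mu z t (D x y v)))).

Definition sd_br (V W : lmodType F) (br : V -> V -> V) (rho : V -> W -> W)
  (p q : V * W) : V * W :=
  (br p.1 q.1, rho p.1 q.2 - rho q.1 p.2).

Definition sd_tr (V W : lmodType F) (br : V -> V -> V) (tr : V -> V -> V -> V)
  (rho : V -> W -> W) (mu : V -> V -> W -> W) (p q r : V * W) : V * W :=
  (tr p.1 q.1 r.1,
   Dop br rho mu p.1 q.1 r.2 + mu q.1 r.1 p.2 - mu p.1 r.1 q.2).

End LY.

(* h^* := 'Hom(h, F^o), the space of linear functionals; <alpha, v> = alpha v *)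
Notation dualsp F h := ('Hom(h, (F : fieldType)^o)).

Section Dual.
Variables (F : fieldType) (h : vectType F).

Definition dual_rho (rho : h -> h -> h) (x : h) (a : dualsp F h) : dualsp F h :=
  linfun (fun v : h => (- a (rho x v)) : F^o).

(* (-mu^* tau)(x,y) = - mu^*(y,x) : <(-mu^* tau)(x,y) alpha, v> = <alpha, mu(y,x) v> *)
Definition dual_mutau (mu : h -> h -> h -> h) (x y : h) (a : dualsp F h) : dualsp F h :=
  linfun (fun v : h => a (mu y x v)).

Definition omega_p (p q : h * dualsp F h) : F := p.2 q.1 - q.2 p.1.

Definition symplectic (brD : h * dualsp F h -> h * dualsp F h -> h * dualsp F h)
  (trD : h * dualsp F h -> h * dualsp F h -> h * dualsp F h -> h * dualsp F h)
  (om : h * dualsp F h -> h * dualsp F h -> F) : Prop :=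
  (
      (forall a p q r, om (a *: p + q) r = a * om p r + om q r) /\
      (forall a p q r, om r (a *: p + q) = a * om r p + om r q) /\
      (forall p q, om p q = - om q p) /\
      (forall p, (forall q, om p q = 0) -> p = 0) /\
      (forall x y z, om x (brD y z) + om y (brD z x) + om z (brD x y) = 0) /\
      (forall x y z w, om z (trD x y w) - om x (trD w z y) + om y (trD w z x)
                       - om w (trD x y z) = 0)).

Definition phase_space (br : h -> h -> h) (tr : h -> h -> h -> h)
  (brD : h * dualsp F h -> h * dualsp F h -> h * dualsp F h)
  (trD : h * dualsp F h -> h * dualsp F h -> h * dualsp F h -> h * dualsp F h) : Prop :=
  (LieYamaguti brD trD /\
      symplectic brD trD omega_p /\
      (forall x y : h, brD (x, 0) (y, 0) = (br x y, 0)) /\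
      (forall x y z : h, trD (x, 0) (y, 0) (z, 0) = (tr x y z, 0)) /\
      (forall a b : dualsp F h, (brD (0, a) (0, b)).1 = 0) /\
      (forall a b c : dualsp F h, (trD (0, a) (0, b) (0, c)).1 = 0)).

End Dual.

Section PreLY.
Variables (F : fieldType) (A : lmodType F).

Definition preLieYamaguti (m : A -> A -> A) (t : A -> A -> A -> A) : Prop :=
  let C x y := m x y - m y x in
  let asc x y z := m (m x y) z - m x (m y z) in
  let tD x y z := t z y x - t z x y + asc y x z - asc x y z in
  (
      (forall a x y z, m (a *: x + y) z = a *: m x z + m y z) /\
      (forall a x y z, m z (a *: x + y) = a *: m z x + m z y) /\
      (forall a x y z w, t (a *: x + y) z w = a *: t x z w + t y z w) /\
      (forall a x y z w, t z (a *: x + y) w = a *: t z x w + t z y w) /\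
      (forall a x y z w, t z w (a *: x + y) = a *: t z w x + t z w y) /\
  ( (forall x y z w, t z (C x y) w - t (m y z) x w + t (m x z) y w = 0) /\
      (forall x y z w, t x y (C z w) = m z (t x y w) - m w (t x y z)) /\
      (forall x y z w u, t (t x y z) w u - t (t x y w) z u - t x y (tD z w u)
                 - t x y (t z w u) + t x y (t w z u) + tD z w (t x y u) = 0) /\
      (forall x y z w u, t z (tD x y w) u + t z (t x y w) u - t z (t y x w) u
                 + t z w (tD x y u) + t z w (t x y u) - t z w (t y x u)
                 = tD x y (t z w u) - t (tD x y z) w u) /\
      (forall x y z w, m (tD x y z) w + m (t x y z) w - m (t y x z) w
                 = tD x y (m z w) - m z (tD x y w)))).

End PreLY.

(* Evaluating the two compatibility identities of omega_p on (x,0), (y,0), (z,0)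
   and an arbitrary functional (0,a) shows, since functionals separate points,
   that the brackets of h are determined by the representation:
   [x,y] = rho(x)y - rho(y)x and [[x,y,z]] = D(x,y)z + mu(y,z)x - mu(x,z)y.
   After this substitution the operation {x,y,z}_D of the candidate
   pre-Lie-Yamaguti algebra is D(x,y)z, and (P1)-(P5) become the five
   representation identities. *)

From HB Require Import structures.
From mathcomp Require Import all_boot all_order all_algebra.
From mathcomp Require Import ring.
Set Implicit Arguments. Unset Strict Implicit. Unset Printing Implicit Defensive.
Local Open Scope ring_scope.
Import GRing.Theory.

Section LinP.
Variables (F : fieldType) (V W : lmodType F) (f : V -> W).
Hypothesis f_linP : forall a x y, f (a *: x + y) = a *: f x + f y.

Lemma linPD x y : f (x + y) = f x + f y.
Proof. by rewrite -[x]scale1r f_linP !scale1r. Qed.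

Lemma linPB x y : f (x - y) = f x - f y.
Proof. by rewrite addrC -scaleN1r f_linP scaleN1r addrC. Qed.
End LinP.

Lemma linfun_linPE (F : fieldType) (aT rT : vectType F) (f : aT -> rT) :
  (forall a u v, f (a *: u + v) = a *: f u + f v) -> linfun f =1 f.
Proof.
move=> f_linP; have f_lin : linear f by move=> a u v; exact: f_linP.
exact: (lfunE (HB.pack f (GRing.isLinear.Build _ _ _ _ f f_lin))).
Qed.

Lemma lfun_separates (F : fieldType) (h : vectType F) (v : h) :
  (forall a : dualsp F h, a v = 0) -> v = 0.
Proof.
move=> v_ker; rewrite (coord_vbasis (memvf v)) big1 // => i _.
have := v_ker (linfun (coord (vbasis fullv) i : h -> F^o)).
by rewrite lfunE => /= ->; rewrite scale0r.
Qed.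

Section PhaseSpace.
Variables (F : fieldType) (h : vectType F).
Variables (br : h -> h -> h) (tr : h -> h -> h -> h).
Variables (rho : h -> h -> h) (mu : h -> h -> h -> h).
Hypothesis rho_linr : forall x a v w, rho x (a *: v + w) = a *: rho x v + rho x w.
Hypothesis mu_linr : forall x y a v w, mu x y (a *: v + w) = a *: mu x y v + mu x y w.

Lemma dual_rhoE x (a : dualsp F h) v : dual_rho rho x a v = - a (rho x v).
Proof.
rewrite linfun_linPE // => k u w.
by rewrite rho_linr linearP /= opprD scalerN.
Qed.

Lemma dual_mutauE x y (a : dualsp F h) v : dual_mutau mu x y a v = a (mu y x v).
Proof. by rewrite linfun_linPE // => k u w; rewrite mu_linr linearP. Qed.

Hypothesis phase_symplectic :
  symplectic (sd_br br (dual_rho rho)) (sd_tr br tr (dual_rho rho) (dual_mutau mu))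
    (@omega_p F h).

Lemma phase_space_brE x y : br x y = rho x y - rho y x.
Proof.
apply/eqP; rewrite -subr_eq0; apply/eqP/lfun_separates => a.
case: phase_symplectic => _ [_ [_ [_ [cyclic _]]]].
have := cyclic (x, 0) (y, 0) (0, a).
rewrite /omega_p /sd_br /= !add_lfunE !opp_lfunE !dual_rhoE !zero_lfunE !linearB /=.
move=> cyclic_xya; rewrite -{}[RHS]cyclic_xya; ring.
Qed.

Lemma phase_space_trE x y z :
  tr x y z = Dop br rho mu x y z + mu y z x - mu x z y.
Proof.
apply/eqP; rewrite -subr_eq0; apply/eqP/lfun_separates => a.
case: phase_symplectic => _ [_ [_ [_ [_ invariant]]]].
have := invariant (x, 0) (y, 0) (z, 0) (0, a).
rewrite /omega_p /sd_tr /Dop /= !add_lfunE !opp_lfunE !dual_rhoE !dual_mutauE.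
rewrite !zero_lfunE !(linearD, linearB) /= !(raddfN a) /=.
move=> invariant_xyza; rewrite -[RHS]oppr0 -[X in _ = - X]invariant_xyza; ring.
Qed.

End PhaseSpace.

Section PreLieYamagutiOfRepresentation.
Variables (F : fieldType) (A : lmodType F).
Variables (br : A -> A -> A) (tr : A -> A -> A -> A).
Variables (rho : A -> A -> A) (mu : A -> A -> A -> A).
Hypothesis rep : representation br tr rho mu.
Hypothesis brE : forall x y, br x y = rho x y - rho y x.
Hypothesis trE : forall x y z, tr x y z = Dop br rho mu x y z + mu y z x - mu x z y.

Lemma rhoDl x y w : rho (x + y) w = rho x w + rho y w.
Proof.
case: rep => rho_linl _.
exact: linPD (fun a u v => rho_linl a u v w) x y.
Qed.

Lemma rhoBl x y w : rho (x - y) w = rho x w - rho y w.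
Proof.
case: rep => rho_linl _.
exact: linPB (fun a u v => rho_linl a u v w) x y.
Qed.

Lemma muDl x y v w : mu (x + y) v w = mu x v w + mu y v w.
Proof.
case: rep => _ [_ [mu_linl _]].
exact: linPD (fun a u u' => mu_linl a u u' v w) x y.
Qed.

Lemma muBl x y v w : mu (x - y) v w = mu x v w - mu y v w.
Proof.
case: rep => _ [_ [mu_linl _]].
exact: linPB (fun a u u' => mu_linl a u u' v w) x y.
Qed.

Lemma muDm x y v w : mu v (x + y) w = mu v x w + mu v y w.
Proof.
case: rep => _ [_ [_ [mu_linm _]]].
exact: linPD (fun a u u' => mu_linm a u u' v w) x y.
Qed.

Lemma muBm x y v w : mu v (x - y) w = mu v x w - mu v y w.
Proof.
case: rep => _ [_ [_ [mu_linm _]]].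
exact: linPB (fun a u u' => mu_linm a u u' v w) x y.
Qed.

(* The right-hand side is {x,y,z}_D for x * y = rho x y and {x,y,z} = mu y z x. *)
Lemma DopE x y z : Dop br rho mu x y z =
  mu y x z - mu x y z + (rho (rho y x) z - rho y (rho x z))
    - (rho (rho x y) z - rho x (rho y z)).
Proof.
rewrite /Dop brE rhoBl !opprB -!addrA; congr (_ + (_ + _)).
by rewrite addrCA [RHS]addrCA; congr (_ + _); rewrite addrCA.
Qed.

(* Rewriting with trE and then rhoDl, muDl, ... in place would also unfold the
   Dop term, whose body is a sum. *)
Lemma rho_trl x y z w : rho (tr x y z) w =
  rho (Dop br rho mu x y z) w + rho (mu y z x) w - rho (mu x z y) w.
Proof. by rewrite trE rhoBl rhoDl. Qed.

Lemma mu_trl x y z v w : mu (tr x y z) v w =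
  mu (Dop br rho mu x y z) v w + mu (mu y z x) v w - mu (mu x z y) v w.
Proof. by rewrite trE muBl muDl. Qed.

Lemma mu_trm x y z v w : mu v (tr x y z) w =
  mu v (Dop br rho mu x y z) w + mu v (mu y z x) w - mu v (mu x z y) w.
Proof. by rewrite trE muBm muDm. Qed.

Lemma representation_preLieYamaguti :
  preLieYamaguti (fun x y : A => rho x y) (fun x y z : A => mu y z x).
Proof.
have [rho_linl [rho_linr [mu_linl [mu_linm [mu_linr rep_ids]]]]] := rep.
have [rep1 [rep2 [rep3 [rep4 rep5]]]] := rep_ids.
split; first exact: rho_linl.
split; first by move=> a x y z; apply: rho_linr.
split; first by move=> a x y z w; apply: mu_linr.
split; first by move=> a x y z w; apply: mu_linl.
split; first by move=> a x y z w; apply: mu_linm.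
split; first by move=> x y z w; rewrite -brE; apply: rep1.
split.
  move=> x y z w; apply/eqP; rewrite -brE -subr_eq0 opprB addrA addrAC.
  by apply/eqP; apply: rep2.
split.
  move=> x y z w u; rewrite -!DopE.
  by have := rep4 y z w u x; rewrite mu_trm !opprD opprK !addrA.
split.
  move=> x y z w u; rewrite -!DopE.
  by have := rep5 x y w u z; rewrite mu_trl mu_trm !addrA.
move=> x y z w; rewrite -!DopE.
by have := rep3 x y z w; rewrite rho_trl.
Qed.
End PreLieYamagutiOfRepresentation.

Theorem corollary4p9 (F : fieldType) (charF0 : [pchar F] =i pred0) (h : vectType F)
  (br : h -> h -> h) (tr : h -> h -> h -> h)
  (rho : h -> h -> h) (mu : h -> h -> h -> h) :
  LieYamaguti br tr ->
  representation br tr rho mu ->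
  phase_space br tr (sd_br br (dual_rho rho))
                    (sd_tr br tr (dual_rho rho) (dual_mutau mu)) ->
  preLieYamaguti (fun x y : h => rho x y) (fun x y z : h => mu y z x).
Proof.
move=> _ rep [_ [symp _]].
have [_ [rho_linr [_ [_ [mu_linr _]]]]] := rep.
apply: representation_preLieYamaguti rep _ _ => [x y | x y z].
  exact: phase_space_brE rho_linr symp x y.
exact: phase_space_trE rho_linr mu_linr symp x y z.
Qed.
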